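(* Let $0<x_L<\mu<x_H<1$, let $F$ be the distribution over posteriors supported on $\{x_L,x_H\}$ with mean $\mu$, and consider a contract implementing $F$ that minimizes the principal's expected transfer among all contracts implementing $F$. Write $\alpha=t(x_L,\theta_1)$, $\beta=t(x_L,\theta_2)$, $\gamma=t(x_H,\theta_1)$, $\delta=t(x_H,\theta_2)$, and let $f$ be the tangent line to $N(\cdot\mid x_L)$ at $x_L$, namely $f(x)=(1-x_L)\alpha+x_L\beta-\kappa c(x_L)+(\beta-\alpha-\kappa c'(x_L))(x-x_L)$. Say the constraint (IC) is the requirement $f(x)\ge v_0-\kappa c(x)$ for all $x\in[0,1]$, and that it binds if equality holds at some $x\in[0,1]$. Then at the optimum one of the following holds: (i) $F$ can be implemented efficiently (and (IC) binds); or (ii) $F$ cannot be implemented efficiently, and either (a) (IC) binds and $\beta=0$; or (b) (IC) binds and $\gamma=0$; or (c) (IC) does not bind and $\gamma=\beta=0$.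
   Context: There are two states $\Theta=\{\theta_1,\theta_2\}$; a belief is identified with $x\in[0,1]$, the probability of $\theta_2$; the prior is $\mu\in(0,1)$. Distributions over posteriors are probability measures on $[0,1]$ with mean $\mu$. Acquiring $F$ costs the agent $\kappa\int c\,dF$, where $\kappa>0$ and $c:[0,1]\to\mathbb{R}_+$ is strictly convex, twice continuously differentiable, bounded on $(0,1)$, $c(\mu)=0$. The agent is risk neutral and protected by limited liability: a contract $(M,t)$ is a compact message set $M$ and a transfer $t:M\times\Theta\to\mathbb{R}_+$ in money. The agent has outside option $v_0\ge0$. Timing: the principal offers $(M,t)$; the agent rejects (getting $v_0$) or accepts, chooses any Bayes-plausible $G$ paying $\kappa\int c\,dG$, privately observes $x\sim G$, then walks away (getting $v_0$) or sends $d\in M$ and receives $t(d,\theta)$ in realized state $\theta$. $N(x\mid d)=(1-x)t(d,\theta_1)+x\,t(d,\theta_2)-\kappa c(x)$. $(M,t)$ implements $F$ if $M=\operatorname{supp}(F)$ and ''accept, acquire $F$, send the realized posterior as message'' is optimal among all agent strategies (rejecting; or accepting, acquiring any $G$, and at each posterior sending any possibly randomized message or walking away). The principal's cost is the expected transfer. $F$ is implemented efficiently if it is implemented at expected transfer equal to the first-best cost $\kappa\int c\,dF+v_0$. *)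

From HB Require Import structures.
From mathcomp Require Import all_boot all_order all_algebra.
From mathcomp Require Import all_classical all_reals all_analysis.

Set Implicit Arguments.
Unset Strict Implicit.
Unset Printing Implicit Defensive.

Import Order.TTheory GRing.Theory Num.Theory.
Import numFieldNormedType.Exports.

Local Open Scope classical_set_scope.
Local Open Scope ring_scope.

Inductive state := th1 | th2.

(* A contract with message set M = {x_L, x_H} (= supp F) is given by its
   transfer t : M * Theta -> R; we represent it by t : R -> state -> R,
   of which only the values at the messages x_L and x_H matter. *)

Definition exp_tr (R : realType) (t : R -> state -> R) (d x : R) : R :=
  (1 - x) * t d th1 + x * t d th2.

Definition Nval (R : realType) (kappa : R) (c : R -> R)
    (t : R -> state -> R) (x d : R) : R :=
  exp_tr t d x - kappa * c x.

(* The distribution F over posteriors supported on {x_L, x_H} with mean mu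
   puts weight wL on x_L and wH on x_H. *)
Definition wL (R : realType) (mu xL xH : R) : R := (xH - mu) / (xH - xL).
Definition wH (R : realType) (mu xL xH : R) : R := (mu - xL) / (xH - xL).

(* Bayes-plausible distributions over posteriors: probability measures
   on [0,1] (as Borel probability measures on R giving mass 1 to [0,1])
   with mean mu. *)
Definition bayes_plausible (R : realType) (mu : R) (G : probability R R) : Prop :=
  G `[0%R, 1%R]%classic = 1%E /\ (\int[G]_(x in `[0%R, 1%R]%classic) x%:E = mu%:E)%E.

(* A (possibly randomized) reporting strategy after acquiring information:
   at posterior x, send x_L with probability qL x, send x_H with probability
   qH x, and walk away with probability 1 - qL x - qH x. *)
Definition strategy (R : realType) (qL qH : R -> R) : Prop :=
  measurable_fun (`[0%R, 1%R]%classic : set R) qL /\ measurable_fun (`[0%R, 1%R]%classic : set R) qH /\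
  (forall x, 0 <= x <= 1 -> 0 <= qL x /\ 0 <= qH x /\ qL x + qH x <= 1).

Definition dev_payoff (R : realType) (kappa v0 : R) (c : R -> R)
    (xL xH : R) (t : R -> state -> R) (G : probability R R) (qL qH : R -> R)
    : \bar R :=
  (\int[G]_(x in `[0%R, 1%R]%classic)
      ((1 - qL x - qH x) * v0 + qL x * exp_tr t xL x + qH x * exp_tr t xH x)%:E
   - kappa%:E * \int[G]_(x in `[0%R, 1%R]%classic) (c x)%:E)%E.

(* agent's expected payoff from accepting, acquiring F and reporting
   the realized posterior truthfully *)
Definition rec_payoff (R : realType) (kappa : R) (c : R -> R)
    (mu xL xH : R) (t : R -> state -> R) : R :=
  wL mu xL xH * Nval kappa c t xL xL + wH mu xL xH * Nval kappa c t xH xH.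

Definition implements (R : realType) (kappa v0 : R) (c : R -> R)
    (mu xL xH : R) (t : R -> state -> R) : Prop :=
  (forall d th, (d = xL \/ d = xH) -> 0 <= t d th) /\
  (* better than rejecting *)
  v0 <= rec_payoff kappa c mu xL xH t /\
  (forall (G : probability R R) (qL qH : R -> R),
      bayes_plausible mu G -> strategy qL qH ->
      (dev_payoff kappa v0 c xL xH t G qL qH <=
         (rec_payoff kappa c mu xL xH t)%:E)%E).

Definition principal_cost (R : realType) (mu xL xH : R)
    (t : R -> state -> R) : R :=
  wL mu xL xH * exp_tr t xL xL + wH mu xL xH * exp_tr t xH xH.

Definition first_best (R : realType) (kappa v0 : R) (c : R -> R)
    (mu xL xH : R) : R :=
  kappa * (wL mu xL xH * c xL + wH mu xL xH * c xH) + v0.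

Definition efficiently_implementable (R : realType) (kappa v0 : R)
    (c : R -> R) (mu xL xH : R) : Prop :=
  exists t, implements kappa v0 c mu xL xH t /\
            principal_cost mu xL xH t = first_best kappa v0 c mu xL xH.

Definition optimal_contract (R : realType) (kappa v0 : R) (c : R -> R)
    (mu xL xH : R) (t : R -> state -> R) : Prop :=
  implements kappa v0 c mu xL xH t /\
  forall t', implements kappa v0 c mu xL xH t' ->
             principal_cost mu xL xH t <= principal_cost mu xL xH t'.

Definition tangent_f (R : realType) (kappa : R) (c : R -> R)
    (xL : R) (t : R -> state -> R) (x : R) : R :=
  (1 - xL) * t xL th1 + xL * t xL th2 - kappa * c xL
  + (t xL th2 - t xL th1 - kappa * derive1 c xL) * (x - xL).

Definition IC_holds (R : realType) (kappa v0 : R) (c : R -> R)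
    (xL : R) (t : R -> state -> R) : Prop :=
  forall x, 0 <= x <= 1 -> v0 - kappa * c x <= tangent_f kappa c xL t x.

Definition IC_binds (R : realType) (kappa v0 : R) (c : R -> R)
    (xL : R) (t : R -> state -> R) : Prop :=
  exists x, 0 <= x <= 1 /\ tangent_f kappa c xL t x = v0 - kappa * c x.

Definition cost_kernel (R : realType) (c : R -> R) (mu : R) : Prop :=
  (forall x, 0 <= x <= 1 -> 0 <= c x) /\
  (forall x y s, 0 <= x <= 1 -> 0 <= y <= 1 -> x != y -> 0 < s < 1 ->
     c (s * x + (1 - s) * y) < s * c x + (1 - s) * c y) /\
  (forall x, 0 < x < 1 ->
     derivable c x 1 /\ derivable (derive1 c) x 1 /\
     {for x, continuous (derive1 (derive1 c))}) /\
  (exists B, forall x, 0 < x < 1 -> c x <= B) /\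
  c mu = 0.

From HB Require Import structures.
From mathcomp Require Import all_boot all_order all_algebra.
From mathcomp Require Import all_classical all_reals all_analysis.
From mathcomp Require Import measurable_realfun ring lra.
Import Order.TTheory GRing.Theory Num.Theory.
Import numFieldNormedType.Exports.
Set Implicit Arguments.
Unset Strict Implicit.
Unset Printing Implicit Defensive.
Local Open Scope classical_set_scope.
Local Open Scope ring_scope.

(* Testing two-point deviations (mix the posterior x with x_L or x_H, reported
   truthfully) shows that (M, t) implements F iff the transfers are nonnegative
   and the chord L through (x_L, N(x_L | x_L)) and (x_H, N(x_H | x_H)) lies above
   v_0 - kappa c, N(. | x_L) and N(. | x_H) on [0, 1]; the converse direction
   integrates these bounds against an arbitrary Bayes-plausible G.  Since
   N(. | x_L) touches L at the interior point x_L, L is the tangent line f, so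
   (IC) binds iff the slack L - v_0 + kappa c vanishes somewhere on [0, 1].
   Subtracting an affine a(x) = (1 - x) a_0 + x a_1 from the transfers in both
   states lowers L by a and the cost by a(mu); hence at an optimum no such a with
   a(mu) > 0 keeps the transfers nonnegative and stays below the slack.  If F is
   not efficiently implementable then L(mu) > v_0, and a small multiple of
   L - v_0 is such an improvement unless beta = 0 or gamma = 0.  If moreover (IC)
   does not bind, the slack has a positive lower bound, and a small multiple of
   x - x_L (when gamma = 0) or of x_H - x (when beta = 0) improves unless the
   other transfer vanishes as well. *)

Local Ltac solve_measurable := repeat first [ assumption
  | exact: measurable_cst | exact: measurable_id | exact: oppr_measurable
  | exact: measurable_indic | apply: measurable_funD | apply: measurable_funB
  | apply: measurable_funM | apply: measurable_funN ].

Section two_point_distribution.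
Variable R : realType.

Local Notation I01 := (`[0%R, 1%R]%classic : set R).

Lemma in_itv01 (x : R) : 0 <= x <= 1 -> x \in I01.
Proof. by move=> x01; apply/mem_set; rewrite /= in_itv. Qed.

(* The weight is clamped into [0, 1] to make [dirac_mix] total; the clamp is
   the identity on the weights actually used. *)
Definition clamp01 (w : R) : R := Num.min (Num.max w 0) 1.

Lemma clamp01_ge0 w : 0 <= clamp01 w.
Proof. by rewrite le_min ler01 andbT le_max lexx orbT. Qed.

Lemma clamp01_le1 w : 0 <= 1 - clamp01 w.
Proof. by rewrite subr_ge0 ge_min lexx orbT. Qed.

Lemma clamp01_id w : 0 <= w <= 1 -> clamp01 w = w.
Proof. by move=> /andP[w0 w1]; rewrite /clamp01 max_l // min_l. Qed.

Definition dirac_mix (w x y : R) :=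
  measure_add (mscale (NngNum (clamp01_ge0 w)) (@dirac _ R x R))
              (mscale (NngNum (clamp01_le1 w)) (@dirac _ R y R)).

Lemma dirac_mix_setT w x y : dirac_mix w x y setT = 1%E.
Proof.
by rewrite /dirac_mix measure_addE /= /mscale /= !diracT !mule1 -EFinD subrKC.
Qed.

HB.instance Definition _ w x y := Measure.on (dirac_mix w x y).
HB.instance Definition _ w x y :=
  Measure_isProbability.Build _ _ _ (dirac_mix w x y) (dirac_mix_setT w x y).

Lemma dirac_mix_itv01 w x y : 0 <= w <= 1 -> 0 <= x <= 1 -> 0 <= y <= 1 ->
  dirac_mix w x y I01 = 1%E.
Proof.
move=> w01 x01 y01.
rewrite /dirac_mix measure_addE /= /mscale /= !diracE /= clamp01_id //.
by rewrite !in_itv01 // !mule1 -EFinD subrKC.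
Qed.

Lemma integral_dirac_mix (w x y : R) (g : R -> R) :
  0 <= w <= 1 -> 0 <= x <= 1 -> 0 <= y <= 1 ->
  measurable_fun I01 g -> (forall z, 0 <= z <= 1 -> 0 <= g z) ->
  (\int[dirac_mix w x y]_(z in I01) (g z)%:E = (w * g x + (1 - w) * g y)%:E)%E.
Proof.
move=> w01 x01 y01 mg g0.
have g0' z : I01 z -> (0 <= (g z)%:E)%E by rewrite /= in_itv /= lee_fin => /g0.
have mgE : measurable_fun I01 (EFin \o g) by exact/measurable_EFinP.
rewrite ge0_integral_measure_add // !ge0_integral_mscale // !integral_dirac //.
by rewrite !diracE /= !in_itv01 // clamp01_id // !mul1e -!EFinM -EFinD.
Qed.

Lemma bayes_plausible_dirac_mix w x y : 0 <= w <= 1 -> 0 <= x <= 1 -> 0 <= y <= 1 ->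
  bayes_plausible (w * x + (1 - w) * y) (dirac_mix w x y).
Proof.
move=> w01 x01 y01; split; first exact: dirac_mix_itv01.
by rewrite (@integral_dirac_mix w x y id) // => z /andP[].
Qed.

End two_point_distribution.

Lemma exists_small_scale (R : realFieldType) (X Y g b : R) : 0 < g -> 0 < b ->
  exists2 lam, 0 < lam <= 1 & lam * X <= g /\ lam * Y <= b.
Proof.
move=> g_gt0 b_gt0.
have scale_le (u Z l : R) : 0 <= l -> l <= u / (1 + `|Z|) -> l * Z <= u.
  move=> l0; have := normr_ge0 Z; have := ler_norm Z => Z_le nZ.
  rewrite ler_pdivlMr; last lra.
  by apply: le_trans; rewrite ler_wpM2l //; lra.
pose lam := Num.min 1 (Num.min (g / (1 + `|X|)) (b / (1 + `|Y|))).
have pos (u Z : R) : 0 < u -> 0 < u / (1 + `|Z|).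
  by move=> u0; rewrite divr_gt0 //; have := normr_ge0 Z; lra.
have lam_gt0 : 0 < lam by rewrite !lt_min ltr01 !pos.
exists lam; first by rewrite lam_gt0 ge_min lexx.
split; apply: scale_le; rewrite ?(ltW lam_gt0) // !ge_min lexx ?orbT //.
Qed.

Section bayes_plausible_integrals.
Variables (R : realType) (mu : R) (G : probability R R).
Hypothesis G_plausible : bayes_plausible mu G.

Let I01 : set R := `[0%R, 1%R]%classic.

Lemma bounded_integrable01 (f : R -> R) (M : R) : measurable_fun I01 f ->
  (forall z, 0 <= z <= 1 -> `|f z| <= M) -> G.-integrable I01 (EFin \o f).
Proof.
move=> mf fM.
have mI : measurable I01 by exact: measurable_itv.
have GI : (G I01 < +oo)%E := le_lt_trans (probability_le1 G mI) (ltry 1).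
apply: measurable_bounded_integrable => //.
exists M; split; first exact: num_real.
by move=> N MN z; rewrite /I01 /= in_itv /= => /fM /le_trans; apply; exact: ltW.
Qed.

Lemma integral_affine01 (A B : R) :
  (\int[G]_(z in I01) (A + B * z)%:E = (A + B * mu)%:E)%E.
Proof.
have G01 : G I01 = 1%E := G_plausible.1.
have Gmean : (\int[G]_(z in I01) z%:E = mu%:E)%E := G_plausible.2.
have mI : measurable I01 by exact: measurable_itv.
have iid : G.-integrable I01 (EFin \o id).
  by apply: (@bounded_integrable01 id 1) => // z /andP[z0 z1]; rewrite ger0_norm.
under eq_integral do rewrite EFinD EFinM.
rewrite integralD //; last 2 first.
- by apply: (@bounded_integrable01 (cst A) `|A|) => //; exact: measurable_cst.
- exact: integrableZl.
have -> : (\int[G]_(z in I01) A%:E = A%:E)%E.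
  by rewrite (integral_cst G mI A%:E) -[RHS]mule1; congr (_ * _)%E; exact: G01.
rewrite integralZl //.
(* [Gmean] sees [G] through another coercion, so it only applies up to conversion. *)
transitivity (A%:E + B%:E * mu%:E)%E; first by congr (_ + _ * _)%E.
by rewrite -EFinM -EFinD.
Qed.

Lemma integral_le_affine_cost (g c : R -> R) (A B k : R) : 0 <= k ->
  measurable_fun I01 g -> measurable_fun I01 c ->
  (exists M, forall z, 0 <= z <= 1 -> `|c z| <= M) ->
  (forall z, 0 <= z <= 1 -> 0 <= g z <= A + B * z + k * c z) ->
  (\int[G]_(z in I01) (g z)%:E - k%:E * \int[G]_(z in I01) (c z)%:E
     <= (A + B * mu)%:E)%E.
Proof.
move=> k0 mg mc [M cM] g_le.
have mI : measurable I01 by exact: measurable_itv.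
have gI z : I01 z -> 0 <= g z <= A + B * z + k * c z.
  by rewrite /I01 /= in_itv /=; exact: g_le.
have ic : G.-integrable I01 (EFin \o c) by exact: bounded_integrable01 cM.
have ia : G.-integrable I01 (EFin \o (fun z => A + B * z)).
  apply: (@bounded_integrable01 _ (`|A| + `|B|)); first by solve_measurable.
  move=> z /andP[z0 z1]; apply: le_trans (ler_normD _ _) _.
  by rewrite lerD2l normrM (ger0_norm z0) ler_piMr.
have g_int : (\int[G]_(z in I01) (g z)%:E
    <= \int[G]_(z in I01) (A + B * z)%:E + k%:E * \int[G]_(z in I01) (c z)%:E)%E.
  rewrite -integralZl // -integralD //; last exact: integrableZl.
  apply: ge0_le_integral => //.
  - by move=> z /gI /andP[g0 _]; rewrite lee_fin.
  - exact/measurable_EFinP.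
  - by apply/measurable_EFinP; solve_measurable.
  - by move=> z /gI /andP[_ gh]; rewrite /= -EFinM -EFinD lee_fin.
rewrite leeBlDr; last by rewrite fin_numM // integrable_fin_num.
by rewrite -integral_affine01.
Qed.

End bayes_plausible_integrals.

Section contract.
Variables (R : realType) (kappa v0 mu xL xH : R) (c : R -> R).
Hypotheses (kappa_gt0 : 0 < kappa) (v0_ge0 : 0 <= v0) (c_kernel : cost_kernel c mu).
Hypotheses (xL_gt0 : 0 < xL) (xL_lt_mu : xL < mu) (mu_lt_xH : mu < xH) (xH_lt1 : xH < 1).

Let I01 : set R := `[0%R, 1%R]%classic.

(* [lra] ignores section hypotheses, so they are first copied into the goal. *)
Local Ltac lra_ := have := kappa_gt0; have := v0_ge0;
  have := xL_gt0; have := xL_lt_mu; have := mu_lt_xH; have := xH_lt1; lra.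

Let xH_sub_xL_neq0 : xH - xL != 0.
Proof. by rewrite subr_eq0 gt_eqF // (lt_trans xL_lt_mu). Qed.

Lemma c_ge0 (z : R) : 0 <= z <= 1 -> 0 <= c z.
Proof. by case: c_kernel => c0 _; exact: c0. Qed.

Lemma c_derivable (z : R) : 0 < z < 1 -> derivable c z 1.
Proof. by case: c_kernel => _ [_ [cd _]] z01; case: (cd z z01). Qed.

Lemma c_mu : c mu = 0.
Proof. by case: c_kernel => _ [_ [_ [_ ->]]]. Qed.

Lemma measurable_c : measurable_fun I01 c.
Proof.
apply: (@measurable_fun_itv_cc _ _ _ false true).
apply: open_continuous_measurable_fun; first exact: interval_open.
move=> z; rewrite inE /= in_itv /= => z01.
by apply/differentiable_continuous; rewrite -derivable1_diffP; exact: c_derivable.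
Qed.

Lemma c_bounded : exists M, forall z, 0 <= z <= 1 -> `|c z| <= M.
Proof.
case: c_kernel => _ [_ [_ [[B cB] _]]].
exists (`|B| + c 0 + c 1) => z /andP[z0 z1].
have c00 : 0 <= c 0 by apply: c_ge0; rewrite lexx ler01.
have c10 : 0 <= c 1 by apply: c_ge0; rewrite lexx ler01.
rewrite ger0_norm; last by apply: c_ge0; rewrite z0 z1.
have := ler_norm B; have := normr_ge0 B.
have [->|z_neq0] := eqVneq z 0; first lra.
have [->|z_neq1] := eqVneq z 1; first lra.
have : c z <= B by apply: cB; rewrite !lt_neqAle eq_sym z_neq0 z_neq1 z0 z1.
lra.
Qed.

Definition limited_liability (t : R -> state -> R) :=
  forall d th, d = xL \/ d = xH -> 0 <= t d th.

Definition mixed_report (eL eH : R) := [/\ 0 <= eL, 0 <= eH & eL + eH <= 1].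

Definition report_value (t : R -> state -> R) (eL eH x : R) :=
  (1 - eL - eH) * v0 + eL * exp_tr t xL x + eH * exp_tr t xH x.

Definition payoff (t : R -> state -> R) (eL eH x : R) :=
  report_value t eL eH x - kappa * c x.

Definition chord (t : R -> state -> R) (z : R) :=
  Nval kappa c t xL xL
  + (Nval kappa c t xH xH - Nval kappa c t xL xL) / (xH - xL) * (z - xL).

Definition slack (t : R -> state -> R) (z : R) := chord t z - v0 + kappa * c z.

Lemma exp_tr_ge0 t (d x : R) : limited_liability t -> d = xL \/ d = xH ->
  0 <= x <= 1 -> 0 <= exp_tr t d x.
Proof.
move=> LL dLH /andP[x0 x1]; rewrite /exp_tr.
by rewrite addr_ge0 // mulr_ge0 ?LL // subr_ge0.
Qed.

Lemma report_value_ge0 t (eL eH x : R) : limited_liability t -> mixed_report eL eH ->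
  0 <= x <= 1 -> 0 <= report_value t eL eH x.
Proof.
move=> LL [eL0 eH0 e1] x01.
have e0 : 0 <= 1 - eL - eH by lra.
by rewrite /report_value !addr_ge0 ?mulr_ge0 // exp_tr_ge0 //; [left | right].
Qed.

Lemma report_value_le t (eL eH x h : R) : mixed_report eL eH ->
  v0 <= h -> exp_tr t xL x <= h -> exp_tr t xH x <= h -> report_value t eL eH x <= h.
Proof.
move=> [eL0 eH0 e1] v0h Lh Hh; rewrite /report_value.
have e0 : 0 <= 1 - eL - eH by lra.
have := ler_wpM2l e0 v0h; have := ler_wpM2l eL0 Lh; have := ler_wpM2l eH0 Hh.
lra.
Qed.

Lemma chord_xL t : chord t xL = Nval kappa c t xL xL.
Proof. by rewrite /chord subrr mulr0 addr0. Qed.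

Lemma chord_xH t : chord t xH = Nval kappa c t xH xH.
Proof. by rewrite /chord; field. Qed.

Lemma chord_affine t (z : R) : chord t z = chord t 0 + (chord t 1 - chord t 0) * z.
Proof. by rewrite /chord; ring. Qed.

Lemma chord_convex t (w x y : R) :
  chord t (w * x + (1 - w) * y) = w * chord t x + (1 - w) * chord t y.
Proof. by rewrite /chord; ring. Qed.

Lemma rec_payoff_chord t : rec_payoff kappa c mu xL xH t = chord t mu.
Proof. by rewrite /rec_payoff /chord /wL /wH; field. Qed.

Lemma deviation_two_point t (x y w eL eH fL fH : R) :
  implements kappa v0 c mu xL xH t -> x != y ->
  0 <= x <= 1 -> 0 <= y <= 1 -> 0 <= w <= 1 -> w * x + (1 - w) * y = mu ->
  mixed_report eL eH -> mixed_report fL fH ->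
  w * payoff t eL eH x + (1 - w) * payoff t fL fH y <= rec_payoff kappa c mu xL xH t.
Proof.
move=> [LL [_ dev]] xy x01 y01 w01 wmu e f.
pose switch a b z : R := b + (a - b) * \1_[set x] z.
have switchE a b z : switch a b z = if z == x then a else b.
  by rewrite /switch indicE in_set1; case: eqP => _ /=; ring.
have switch_x a b : switch a b x = a by rewrite switchE eqxx.
have switch_y a b : switch a b y = b by rewrite switchE eq_sym (negbTE xy).
have m_switch a b : measurable_fun I01 (switch a b).
  by rewrite /switch; solve_measurable; exact: measurable_set1.
have G_plausible : bayes_plausible mu (dirac_mix w x y).
  by rewrite -wmu; exact: bayes_plausible_dirac_mix.
have switch_report z : mixed_report (switch eL fL z) (switch eH fH z).
  by rewrite !switchE; case: (z == x).
have st : strategy (switch eL fL) (switch eH fH).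
  by split; [|split] => // z _; case: (switch_report z).
have := dev _ _ _ G_plausible st; rewrite /dev_payoff.
rewrite (@integral_dirac_mix _ w x y c) //; last 2 first.
- exact: measurable_c.
- exact: c_ge0.
rewrite (@integral_dirac_mix _ w x y
  (fun z => report_value t (switch eL fL z) (switch eH fH z) z)) //; last 2 first.
- have := m_switch eL fL; have := m_switch eH fH => mH mL.
  by rewrite /report_value /exp_tr; solve_measurable.
- by move=> z z01; exact: report_value_ge0.
by rewrite -EFinM -EFinB lee_fin /payoff !switch_x !switch_y; apply: le_trans; lra.
Qed.

Lemma payoff_le_chord t (x eL eH : R) : implements kappa v0 c mu xL xH t ->
  0 <= x <= 1 -> mixed_report eL eH -> payoff t eL eH x <= chord t x.
Proof.
move=> imp x01 e.
(* Split the prior between x and the message on the other side of mu. *)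
suff through (y w fL fH : R) : x != y -> 0 <= y <= 1 -> 0 < w <= 1 ->
    w * x + (1 - w) * y = mu -> mixed_report fL fH -> payoff t fL fH y = chord t y ->
    payoff t eL eH x <= chord t x.
  have [x_lt_mu|mu_le_x] := ltP x mu.
    apply: (through xH ((xH - mu) / (xH - x)) 0 1).
    - by rewrite lt_eqF //; lra_.
    - lra_.
    - by apply/andP; split; [apply: divr_gt0 | rewrite ler_pdivrMr]; lra_.
    - by field; rewrite subr_eq0 gt_eqF //; lra_.
    - by split; lra_.
    - by rewrite chord_xH /payoff /report_value /Nval; ring.
  apply: (through xL ((mu - xL) / (x - xL)) 1 0).
  - by rewrite gt_eqF //; lra_.
  - lra_.
  - by apply/andP; split; [apply: divr_gt0 | rewrite ler_pdivrMr]; lra_.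
  - by field; rewrite subr_eq0 gt_eqF //; lra_.
  - by split; lra_.
  - by rewrite chord_xL /payoff /report_value /Nval; ring.
move=> xy y01 /andP[w_gt0 w_le1] wmu f fy.
have w01 : 0 <= w <= 1 by rewrite ltW.
have := deviation_two_point imp xy x01 y01 w01 wmu e f.
by rewrite fy rec_payoff_chord -wmu chord_convex lerD2r ler_pM2l.
Qed.

Lemma Nval_xL_le_chord t (z : R) : implements kappa v0 c mu xL xH t ->
  0 <= z <= 1 -> Nval kappa c t z xL <= chord t z.
Proof.
move=> imp z01; have r : mixed_report 1 0 by split; lra.
have := payoff_le_chord imp z01 r.
by rewrite /payoff /report_value /Nval; lra.
Qed.

Lemma Nval_xH_le_chord t (z : R) : implements kappa v0 c mu xL xH t ->
  0 <= z <= 1 -> Nval kappa c t z xH <= chord t z.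
Proof.
move=> imp z01; have r : mixed_report 0 1 by split; lra.
have := payoff_le_chord imp z01 r.
by rewrite /payoff /report_value /Nval; lra.
Qed.

Lemma slack_ge0 t (z : R) : implements kappa v0 c mu xL xH t ->
  0 <= z <= 1 -> 0 <= slack t z.
Proof.
move=> imp z01; have r : mixed_report 0 0 by split; lra.
have := payoff_le_chord imp z01 r.
by rewrite /slack /payoff /report_value; lra.
Qed.

Lemma implements_of_chord t : limited_liability t ->
  (forall z, 0 <= z <= 1 -> 0 <= slack t z) ->
  (forall z, 0 <= z <= 1 -> Nval kappa c t z xL <= chord t z) ->
  (forall z, 0 <= z <= 1 -> Nval kappa c t z xH <= chord t z) ->
  implements kappa v0 c mu xL xH t.
Proof.
move=> LL slack0 NL NH; split => //; split.
  by have := slack0 mu; rewrite /slack c_mu rec_payoff_chord; lra_.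
move=> G qL qH G_plausible [mqL [mqH q_report]].
rewrite /dev_payoff rec_payoff_chord chord_affine.
apply: (integral_le_affine_cost G_plausible (ltW kappa_gt0)).
- by rewrite /exp_tr; solve_measurable.
- exact: measurable_c.
- exact: c_bounded.
move=> z z01; have [qL0 [qH0 q1]] := q_report z z01.
have q : mixed_report (qL z) (qH z) by [].
apply/andP; split; first exact: (report_value_ge0 LL q z01).
rewrite -chord_affine; apply: (report_value_le q).
- by have := slack0 z z01; rewrite /slack; lra_.
- by have := NL z z01; rewrite /Nval; lra_.
- by have := NH z z01; rewrite /Nval; lra_.
Qed.

Definition shift (t : R -> state -> R) (a0 a1 : R) : R -> state -> R :=
  fun d th => t d th - (if th is th1 then a0 else a1).

Lemma exp_tr_shift t (a0 a1 d z : R) :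
  exp_tr (shift t a0 a1) d z = exp_tr t d z - ((1 - z) * a0 + z * a1).
Proof. by rewrite /exp_tr /shift; ring. Qed.

Lemma chord_shift t (a0 a1 z : R) :
  chord (shift t a0 a1) z = chord t z - ((1 - z) * a0 + z * a1).
Proof. by rewrite /chord /Nval !exp_tr_shift; field. Qed.

Lemma principal_cost_shift t (a0 a1 : R) :
  principal_cost mu xL xH (shift t a0 a1)
  = principal_cost mu xL xH t - ((1 - mu) * a0 + mu * a1).
Proof. by rewrite /principal_cost !exp_tr_shift /wL /wH; field. Qed.

Lemma transfers_monotone t : implements kappa v0 c mu xL xH t ->
  t xH th1 <= t xL th1 /\ t xL th2 <= t xH th2.
Proof.
move=> imp.
have [xL01 xH01] : 0 <= xL <= 1 /\ 0 <= xH <= 1 by split; lra_.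
have HL := Nval_xH_le_chord imp xL01.
have LH := Nval_xL_le_chord imp xH01.
rewrite chord_xL /Nval /exp_tr in HL; rewrite chord_xH /Nval /exp_tr in LH.
set p := t xH th1 - t xL th1; set q := t xH th2 - t xL th2.
have pq_xL : (1 - xL) * p + xL * q <= 0 by rewrite /p /q; lra_.
have pq_xH : 0 <= (1 - xH) * p + xH * q by rewrite /p /q; lra_.
have p_le_q : p <= q.
  have : 0 <= (xH - xL) * (q - p) by lra_.
  by rewrite pmulr_rge0 ?subr_ge0 //; lra_.
have xH_le1 : 0 <= 1 - xH by lra_.
have := ler_wpM2l (ltW xL_gt0) p_le_q; have := ler_wpM2l xH_le1 p_le_q.
rewrite /p /q; lra_.
Qed.

Lemma optimal_affine_cut t (a0 a1 : R) : optimal_contract kappa v0 c mu xL xH t ->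
  a0 <= t xH th1 -> a1 <= t xL th2 ->
  (forall z, 0 <= z <= 1 -> (1 - z) * a0 + z * a1 <= slack t z) ->
  (1 - mu) * a0 + mu * a1 <= 0.
Proof.
move=> [imp opt] a0_le a1_le a_le.
have [mono1 mono2] := transfers_monotone imp.
have imp' : implements kappa v0 c mu xL xH (shift t a0 a1).
  apply: implements_of_chord.
  - by move=> d [] [->|->]; rewrite /shift subr_ge0; lra.
  - by move=> z z01; have := a_le z z01; rewrite /slack chord_shift; lra.
  - move=> z z01; have := Nval_xL_le_chord imp z01.
    by rewrite /Nval chord_shift exp_tr_shift; lra.
  - move=> z z01; have := Nval_xH_le_chord imp z01.
    by rewrite /Nval chord_shift exp_tr_shift; lra.
by have := opt _ imp'; rewrite principal_cost_shift; lra.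
Qed.

Lemma is_derive_affine_sub_cost (A B k z : R) : derivable c z 1 ->
  is_derive z 1 (fun x => A + B * x - k * c x) (B - k * derive1 c z).
Proof.
move=> dcz.
have dc : is_derive z 1 c (derive1 c z) by rewrite derive1E; apply: derivableP.
have -> : (fun x => A + B * x - k * c x) = (cst A + B \*: id) - k \*: c :> (R -> R).
  by apply/funext => x.
have -> : B - k * derive1 c z = (0 + B *: 1) - k *: derive1 c z.
  by rewrite add0r /GRing.scale /= mulr1.
exact: is_deriveB (is_deriveD (is_derive_cst A z 1) (is_deriveZ B (is_derive_id z 1)))
  (is_deriveZ k dc).
Qed.

Lemma slope_at_interior_max (A B k x0 : R) : 0 < x0 < 1 ->
  (forall x, 0 < x < 1 -> A + B * x - k * c x <= A + B * x0 - k * c x0) ->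
  B = k * derive1 c x0.
Proof.
move=> x0_01 x0_max.
have flat : is_derive x0 1 (fun x => A + B * x - k * c x) 0.
  apply: (@derive1_at_max _ _ 0 1) => // z; rewrite in_itv /= => z01.
  by have [] := is_derive_affine_sub_cost A B k (c_derivable z01).
have := @derive_val _ _ _ _ _ _ _ flat.
rewrite (@derive_val _ _ _ _ _ _ _ (is_derive_affine_sub_cost A B k (c_derivable x0_01))).
by move=> /eqP; rewrite subr_eq0 => /eqP.
Qed.

Lemma tangent_f_chord t (x : R) : implements kappa v0 c mu xL xH t ->
  tangent_f kappa c xL t x = chord t x.
Proof.
move=> imp.
pose A := t xL th1 - chord t 0.
pose B := t xL th2 - t xL th1 - (chord t 1 - chord t 0).
have NLchord z : Nval kappa c t z xL - chord t z = A + B * z - kappa * c z.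
  by rewrite /Nval /exp_tr chord_affine /A /B; ring.
have slopeB : B = kappa * derive1 c xL.
  apply: (@slope_at_interior_max A B kappa xL); first lra_.
  move=> z z01; rewrite -!NLchord chord_xL subrr subr_le0.
  by apply: (Nval_xL_le_chord imp); lra_.
rewrite /tangent_f (chord_affine t x).
have := chord_xL t; rewrite chord_affine /Nval /exp_tr => chord_at_xL.
have -> : t xL th2 - t xL th1 - kappa * derive1 c xL = chord t 1 - chord t 0.
  by rewrite -slopeB /B; ring.
by rewrite -chord_at_xL; ring.
Qed.

Lemma slack_gt0 t (z : R) : implements kappa v0 c mu xL xH t ->
  ~ IC_binds kappa v0 c xL t -> 0 <= z <= 1 -> 0 < slack t z.
Proof.
move=> imp slack_IC z01; rewrite lt_neqAle slack_ge0 // andbT.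
apply/negP => /eqP slack0; apply: slack_IC; exists z; split => //.
by move: slack0; rewrite tangent_f_chord // /slack; lra.
Qed.

Lemma slack_continuous t (a b : R) : 0 < a -> b < 1 ->
  {within `[a, b], continuous (slack t)}.
Proof.
move=> a_gt0 b_lt1.
have -> : slack t
    = fun x => (chord t 0 - v0) + (chord t 1 - chord t 0) * x - (- kappa) * c x.
  by apply/funext => x; rewrite /slack chord_affine; ring.
apply: derivable_within_continuous => z; rewrite in_itv /= => /andP[az zb].
have z01 : 0 < z < 1 by apply/andP; split; lra.
by have [] := is_derive_affine_sub_cost (chord t 0 - v0) (chord t 1 - chord t 0) (- kappa)
  (c_derivable z01).
Qed.

Lemma slack_bounded_below t : implements kappa v0 c mu xL xH t ->
  ~ IC_binds kappa v0 c xL t ->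
  exists2 m, 0 < m & forall z, xL <= z <= xH -> m <= slack t z.
Proof.
move=> imp slack_IC.
have xL_le_xH : xL <= xH by lra_.
have [zmin] := EVT_min xL_le_xH (slack_continuous (t := t) xL_gt0 xH_lt1).
rewrite in_itv /= => zmin_in zmin_min; exists (slack t zmin).
  by apply: slack_gt0 => //; lra_.
by move=> z z_in; apply: zmin_min; rewrite in_itv.
Qed.

(* [c] need not be continuous at 0 and 1, so outside [x_L, x_H] the slack is
   bounded below through a vanishing transfer rather than by compactness. *)
Lemma slack_ge_slack_xH t (z : R) : implements kappa v0 c mu xL xH t ->
  t xH th1 = 0 -> xH <= z <= 1 -> slack t xH <= slack t z.
Proof.
move=> imp gamma0 /andP[xH_le_z z_le1]; have [LL _] := imp.
have delta_ge0 : 0 <= t xH th2 by apply: LL; right.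
have z01 : 0 <= z <= 1 by lra_.
have := Nval_xH_le_chord imp z01.
rewrite /slack chord_xH /Nval /exp_tr gamma0.
have := ler_wpM2r delta_ge0 xH_le_z.
lra_.
Qed.

Lemma slack_ge_slack_xL t (z : R) : implements kappa v0 c mu xL xH t ->
  t xL th2 = 0 -> 0 <= z <= xL -> slack t xL <= slack t z.
Proof.
move=> imp beta0 /andP[z_ge0 z_le_xL]; have [LL _] := imp.
have alpha_ge0 : 0 <= t xL th1 by apply: LL; left.
have z01 : 0 <= z <= 1 by lra_.
have := Nval_xL_le_chord imp z01.
rewrite /slack chord_xL /Nval /exp_tr beta0.
have := ler_wpM2r alpha_ge0 (lerB (lexx 1) z_le_xL).
lra_.
Qed.

Lemma optimal_beta0_or_gamma0 t : optimal_contract kappa v0 c mu xL xH t ->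
  v0 < chord t mu -> t xL th2 = 0 \/ t xH th1 = 0.
Proof.
move=> opt v0_lt; have imp := opt.1; have [LL _] := imp.
have [beta0|beta_neq0] := eqVneq (t xL th2) 0; first by left.
have [gamma0|gamma_neq0] := eqVneq (t xH th1) 0; first by right.
have beta_gt0 : 0 < t xL th2 by rewrite lt_neqAle eq_sym beta_neq0 LL //; left.
have gamma_gt0 : 0 < t xH th1 by rewrite lt_neqAle eq_sym gamma_neq0 LL //; right.
have [lam /andP[lam_gt0 lam_le1] [lam_gamma lam_beta]] :=
  exists_small_scale (chord t 0 - v0) (chord t 1 - v0) gamma_gt0 beta_gt0.
have below z : 0 <= z <= 1 ->
    (1 - z) * (lam * (chord t 0 - v0)) + z * (lam * (chord t 1 - v0)) <= slack t z.
  move=> z01.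
  have -> : (1 - z) * (lam * (chord t 0 - v0)) + z * (lam * (chord t 1 - v0))
      = lam * (chord t z - v0) by rewrite (chord_affine t z); ring.
  have kc_ge0 : 0 <= kappa * c z by rewrite mulr_ge0 ?c_ge0 // ltW.
  have lam_le1' : 0 <= 1 - lam by lra.
  have := mulr_ge0 lam_le1' (slack_ge0 imp z01); have := mulr_ge0 (ltW lam_gt0) kc_ge0.
  rewrite /slack; lra.
have := optimal_affine_cut opt lam_gamma lam_beta below.
have -> : (1 - mu) * (lam * (chord t 0 - v0)) + mu * (lam * (chord t 1 - v0))
    = lam * (chord t mu - v0) by rewrite (chord_affine t mu); ring.
by rewrite pmulr_rle0 // subr_le0 leNgt v0_lt.
Qed.

Lemma optimal_slack_gamma0 t : optimal_contract kappa v0 c mu xL xH t ->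
  ~ IC_binds kappa v0 c xL t -> t xH th1 = 0 -> t xL th2 = 0.
Proof.
move=> opt slack_IC gamma0; have imp := opt.1; have [LL _] := imp.
have [m m_gt0 m_le] := slack_bounded_below imp slack_IC.
have m_le_right z : xL <= z <= 1 -> m <= slack t z.
  move=> /andP[xL_le_z z_le1]; have [z_le_xH|xH_lt_z] := leP z xH.
    by apply: m_le; rewrite xL_le_z.
  apply: le_trans (slack_ge_slack_xH imp gamma0 _); first by apply: m_le; lra_.
  by apply/andP; split; lra_.
apply/eqP; rewrite eq_le (LL _ _ (or_introl erefl)) andbT leNgt; apply/negP => beta_gt0.
pose eps := Num.min m (t xL th2).
have eps_gt0 : 0 < eps by rewrite lt_min m_gt0.
have eps_le_m : eps <= m by rewrite ge_min lexx.
have eps_le_beta : eps <= t xL th2 by rewrite ge_min lexx orbT.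
have below z : 0 <= z <= 1 -> (1 - z) * - (eps * xL) + z * (eps * (1 - xL)) <= slack t z.
  move=> z01.
  have -> : (1 - z) * - (eps * xL) + z * (eps * (1 - xL)) = eps * (z - xL) by ring.
  have [z_le_xL|xL_lt_z] := leP z xL.
    have := slack_ge0 imp z01.
    have : eps * (z - xL) <= 0 by rewrite pmulr_rle0 // subr_le0.
    lra.
  have : m <= slack t z by apply: m_le_right; lra_.
  have : eps * (z - xL) <= eps by rewrite ler_piMr //; lra_.
  lra.
have a0_le : - (eps * xL) <= t xH th1 by rewrite gamma0 oppr_le0 mulr_ge0 //; lra_.
have a1_le : eps * (1 - xL) <= t xL th2.
  by apply: le_trans eps_le_beta; rewrite ler_piMr //; lra_.
have := optimal_affine_cut opt a0_le a1_le below.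
have -> : (1 - mu) * - (eps * xL) + mu * (eps * (1 - xL)) = eps * (mu - xL) by ring.
by rewrite pmulr_rle0 // subr_le0 leNgt xL_lt_mu.
Qed.

Lemma optimal_slack_beta0 t : optimal_contract kappa v0 c mu xL xH t ->
  ~ IC_binds kappa v0 c xL t -> t xL th2 = 0 -> t xH th1 = 0.
Proof.
move=> opt slack_IC beta0; have imp := opt.1; have [LL _] := imp.
have [m m_gt0 m_le] := slack_bounded_below imp slack_IC.
have m_le_left z : 0 <= z <= xH -> m <= slack t z.
  move=> /andP[z_ge0 z_le_xH]; have [z_lt_xL|xL_le_z] := ltP z xL.
    apply: le_trans (slack_ge_slack_xL imp beta0 _); first by apply: m_le; lra_.
    by apply/andP; split; lra_.
  by apply: m_le; rewrite xL_le_z.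
apply/eqP; rewrite eq_le (LL _ _ (or_intror erefl)) andbT leNgt; apply/negP => gamma_gt0.
pose eps := Num.min m (t xH th1).
have eps_gt0 : 0 < eps by rewrite lt_min m_gt0.
have eps_le_m : eps <= m by rewrite ge_min lexx.
have eps_le_gamma : eps <= t xH th1 by rewrite ge_min lexx orbT.
have below z : 0 <= z <= 1 -> (1 - z) * (eps * xH) + z * (eps * (xH - 1)) <= slack t z.
  move=> z01.
  have -> : (1 - z) * (eps * xH) + z * (eps * (xH - 1)) = eps * (xH - z) by ring.
  have [xH_le_z|z_lt_xH] := leP xH z.
    have := slack_ge0 imp z01.
    have : eps * (xH - z) <= 0 by rewrite pmulr_rle0 // subr_le0.
    lra.
  have : m <= slack t z by apply: m_le_left; lra_.
  have : eps * (xH - z) <= eps by rewrite ler_piMr //; lra_.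
  lra.
have a0_le : eps * xH <= t xH th1.
  by apply: le_trans eps_le_gamma; rewrite ler_piMr //; lra_.
have a1_le : eps * (xH - 1) <= t xL th2 by rewrite beta0 pmulr_rle0 //; lra_.
have := optimal_affine_cut opt a0_le a1_le below.
have -> : (1 - mu) * (eps * xH) + mu * (eps * (xH - 1)) = eps * (xH - mu) by ring.
by rewrite pmulr_rle0 // subr_le0 leNgt mu_lt_xH.
Qed.

Lemma principal_cost_chord t : principal_cost mu xL xH t
  = chord t mu + kappa * (wL mu xL xH * c xL + wH mu xL xH * c xH).
Proof. by rewrite -rec_payoff_chord /rec_payoff /principal_cost /Nval; ring. Qed.

Lemma efficient_IC_binds t : optimal_contract kappa v0 c mu xL xH t ->
  efficiently_implementable kappa v0 c mu xL xH -> IC_binds kappa v0 c xL t.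
Proof.
move=> [imp opt] [t' [imp' cost']].
have := opt t' imp'; rewrite cost' principal_cost_chord /first_best => cost_le.
have mu01 : 0 <= mu <= 1 by lra_.
exists mu; split => //; rewrite tangent_f_chord // c_mu mulr0 subr0.
by have := slack_ge0 imp mu01; rewrite /slack c_mu mulr0; lra.
Qed.

Lemma inefficient_chord_gt t : implements kappa v0 c mu xL xH t ->
  ~ efficiently_implementable kappa v0 c mu xL xH -> v0 < chord t mu.
Proof.
move=> imp not_eff; rewrite ltNge; apply/negP => chord_le; apply: not_eff.
exists t; split => //; rewrite principal_cost_chord /first_best.
have mu01 : 0 <= mu <= 1 by lra_.
by have := slack_ge0 imp mu01; rewrite /slack c_mu mulr0; lra.
Qed.

End contract.

Theorem proposition5 (R : realType) (kappa v0 mu xL xH : R) (c : R -> R)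
  (t : R -> state -> R) :
  0 < kappa -> 0 <= v0 -> cost_kernel c mu ->
  0 < xL -> xL < mu -> mu < xH -> xH < 1 ->
  optimal_contract kappa v0 c mu xL xH t ->
  (efficiently_implementable kappa v0 c mu xL xH /\ IC_binds kappa v0 c xL t)
  \/
  (~ efficiently_implementable kappa v0 c mu xL xH /\
     ((IC_binds kappa v0 c xL t /\ t xL th2 = 0) \/
      (IC_binds kappa v0 c xL t /\ t xH th1 = 0) \/
      (~ IC_binds kappa v0 c xL t /\ t xH th1 = 0 /\ t xL th2 = 0))).
Proof.
move=> hk hv0 hc hxL hLmu hmuH hxH opt.
have binds_of_eff := efficient_IC_binds hk hv0 hc hxL hLmu hmuH hxH opt.
have chord_gt := inefficient_chord_gt hk hv0 hc hxL hLmu hmuH hxH opt.1.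
have beta0_or_gamma0 := optimal_beta0_or_gamma0 hk hv0 hc hxL hLmu hmuH hxH opt.
have gamma0_of_beta0 := optimal_slack_beta0 hk hv0 hc hxL hLmu hmuH hxH opt.
have beta0_of_gamma0 := optimal_slack_gamma0 hk hv0 hc hxL hLmu hmuH hxH opt.
have [eff|not_eff] := pselect (efficiently_implementable kappa v0 c mu xL xH).
  by left; split; last exact: binds_of_eff.
right; split => //.
have [beta0|gamma0] := beta0_or_gamma0 (chord_gt not_eff).
  have [binds|slack_IC] := pselect (IC_binds kappa v0 c xL t); first by left.
  by right; right; split => //; split => //; exact: gamma0_of_beta0 slack_IC beta0.
have [binds|slack_IC] := pselect (IC_binds kappa v0 c xL t); first by right; left.
by right; right; split => //; split => //; exact: beta0_of_gamma0 slack_IC gamma0.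
Qed.
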